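(* Let $\Delta$ be the root system of a simple complex Lie algebra, with positive roots $\Delta^+$, simple roots $\Pi$ and highest root $\theta$. Let $\alpha\in\Pi$ be such that $\mathrm{ht}_\alpha(\theta)=2d_\alpha+1$ is odd. Then $\bigcup_{j\ge d_\alpha+1}\Delta_\alpha(j)$ is a maximal abelian (upper) ideal of $\Delta^+$ (equivalently, $\bigoplus_{j\ge d_\alpha+1}\mathfrak g_\alpha(j)$ is a maximal abelian ideal of the Borel subalgebra).
   Context: For $\mu=\sum_{\beta\in\Pi}c_\beta\beta$, $\mathrm{ht}_\alpha(\mu)=c_\alpha$; $\Delta_\alpha(i)=\{\gamma\in\Delta\mid\mathrm{ht}_\alpha(\gamma)=i\}$ and $\mathfrak g_\alpha(i)$ is the corresponding sum of root spaces. An upper ideal of $\Delta^+$ is a subset $I\subset\Delta^+$ with $\gamma\in I,\nu\in\Delta^+,\nu+\gamma\in\Delta^+\Rightarrow\nu+\gamma\in I$; it is abelian if $\gamma'+\gamma''\notin\Delta^+$ for all $\gamma',\gamma''\in I$; maximality is with respect to inclusion among abelian upper ideals. *)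

From HB Require Import structures.
From mathcomp Require Import all_boot all_order all_algebra.
From mathcomp Require Import reals.
Set Implicit Arguments. Unset Strict Implicit. Unset Printing Implicit Defensive.
Import Order.TTheory GRing.Theory Num.Theory.
Local Open Scope ring_scope.

Section RootSystems.
Variables (R : realType) (n : nat).
Notation V := 'rV[R]_n.

Definition dot (u v : V) : R := (u *m v^T) 0 0.

Definition refl (a b : V) : V := b - ((2 * dot b a) / dot a a) *: a.

Definition base_mx (pi : 'I_n -> V) : 'M[R]_n := \matrix_(i, j) pi i 0 j.

(* ht_i(mu): the coefficient of the simple root pi i in mu *)
Definition ht (pi : 'I_n -> V) (i : 'I_n) (mu : V) : R :=
  (mu *m invmx (base_mx pi)) 0 i.

Record irreducible_root_system_with_base (Phi : seq V) (pi : 'I_n -> V) : Prop := {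
  rs_nonzero : 0 \notin Phi;
  rs_refl : forall a b, a \in Phi -> b \in Phi -> refl a b \in Phi;
  rs_integral : forall a b, a \in Phi -> b \in Phi ->
      exists z : int, (2 * dot b a) / dot a a = z%:~R;
  rs_reduced : forall a (c : R), a \in Phi -> c *: a \in Phi -> c = 1 \/ c = -1;
  rs_irreducible : forall P : pred V,
      (forall a b, a \in Phi -> b \in Phi -> P a -> ~~ P b -> dot a b = 0) ->
      (forall a, a \in Phi -> P a) \/ (forall a, a \in Phi -> ~~ P a);
  base_roots : forall i, pi i \in Phi;
  base_basis : base_mx pi \in unitmx;
  base_integral : forall b i, b \in Phi -> exists z : int, ht pi i b = z%:~R;
  base_sign : forall b, b \in Phi ->
      (forall i, 0 <= ht pi i b) \/ (forall i, ht pi i b <= 0)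
}.

Definition pos_root (Phi : seq V) (pi : 'I_n -> V) (b : V) : bool :=
  (b \in Phi) && [forall i, 0 <= ht pi i b].

Definition highest_root (Phi : seq V) (pi : 'I_n -> V) (th : V) : Prop :=
  th \in Phi /\ forall b i, b \in Phi -> ht pi i b <= ht pi i th.

Definition upper_ideal (Phi : seq V) (pi : 'I_n -> V) (I : pred V) : Prop :=
  (forall g, I g -> pos_root Phi pi g) /\
  (forall g nu, I g -> pos_root Phi pi nu -> pos_root Phi pi (nu + g) -> I (nu + g)).

Definition abelian_set (Phi : seq V) (pi : 'I_n -> V) (I : pred V) : Prop :=
  forall g1 g2, I g1 -> I g2 -> ~~ pos_root Phi pi (g1 + g2).

Definition abelian_ideal (Phi : seq V) (pi : 'I_n -> V) (I : pred V) : Prop :=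
  upper_ideal Phi pi I /\ abelian_set Phi pi I.

Definition maximal_abelian_ideal (Phi : seq V) (pi : 'I_n -> V) (I : pred V) : Prop :=
  abelian_ideal Phi pi I /\
  forall J : pred V, abelian_ideal Phi pi J -> (forall g, I g -> J g) ->
    forall g, J g -> I g.

End RootSystems.

(* Let m = ht_a(theta) = 2d + 1 and let sigma be the sum of the roots of
   a-height m.  Each simple reflection s_i with i <> a permutes these roots, so
   sigma is orthogonal to pi i and (sigma, v) = ht_a(v) (sigma, pi a); pairing
   with theta shows (sigma, pi a) > 0.  Hence every root x of positive a-height
   has (y, x) > 0 for some root y of a-height m, and y - x is a root.
   If an abelian ideal J contains I = {a-height >= d + 1} and a root x of
   a-height between 1 and d, then y - x lies in I, hence in J, while
   (y - x) + x = y is a positive root: impossible.  A root g of a-height 0 in J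
   is excluded by irreducibility: some root e of positive a-height has
   (g, e) < 0, so e + g is a positive root of the same a-height as e, and
   either e lies in I or e + g is a root of J of a-height between 1 and d. *)
From mathcomp Require Import all_boot all_order all_algebra.
From mathcomp Require Import reals.
From mathcomp Require Import zify ring lra.
Set Implicit Arguments. Unset Strict Implicit. Unset Printing Implicit Defensive.
Import Order.TTheory GRing.Theory Num.Theory.
Local Open Scope ring_scope.

Section InnerProduct.
Variables (R : realType) (n : nat).
Implicit Types u v w : 'rV[R]_n.

Lemma dotE u v : dot u v = \sum_j u 0 j * v 0 j.
Proof. by rewrite /dot !mxE; apply: eq_bigr => j _; rewrite mxE. Qed.

Lemma dotC u v : dot u v = dot v u.
Proof. by rewrite !dotE; apply: eq_bigr => j _; rewrite mulrC. Qed.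

Lemma dotDl u v w : dot (u + w) v = dot u v + dot w v.
Proof. by rewrite !dotE -big_split; apply: eq_bigr => j _; rewrite mxE mulrDl. Qed.

Lemma dotZl (c : R) u v : dot (c *: u) v = c * dot u v.
Proof. by rewrite !dotE mulr_sumr; apply: eq_bigr => j _; rewrite mxE mulrA. Qed.

Lemma dotNl u v : dot (- u) v = - dot u v.
Proof. by rewrite -scaleN1r dotZl mulN1r. Qed.

Lemma dotBl u v w : dot (u - w) v = dot u v - dot w v.
Proof. by rewrite dotDl dotNl. Qed.

Lemma dotNr u v : dot v (- u) = - dot v u.
Proof. by rewrite dotC dotNl dotC. Qed.

Lemma dotBr u v w : dot v (u - w) = dot v u - dot v w.
Proof. by rewrite !(dotC v) dotBl. Qed.

Lemma dot_suml (I : Type) (r : seq I) (P : pred I) (F : I -> 'rV[R]_n) v :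
  dot (\sum_(i <- r | P i) F i) v = \sum_(i <- r | P i) dot (F i) v.
Proof.
apply: (big_morph (fun u => dot u v)) => [u w|]; first exact: dotDl.
by rewrite dotE big1 // => j _; rewrite mxE mul0r.
Qed.

Lemma dot_ge0 u : 0 <= dot u u.
Proof. by rewrite dotE; apply: sumr_ge0 => j _; rewrite -expr2 sqr_ge0. Qed.

Lemma dot_eq0 u : (dot u u == 0) = (u == 0).
Proof.
apply/idP/eqP => [|->]; last by rewrite -(scale0r 0) dotZl mul0r.
rewrite dotE psumr_eq0 => [/allP u0|j _]; last by rewrite -expr2 sqr_ge0.
apply/rowP => j; have /(_ (mem_index_enum j)) := u0 j.
by rewrite -expr2 sqrf_eq0 mxE => /eqP.
Qed.

End InnerProduct.

Section Heights.
Variables (R : realType) (n : nat) (pi : 'I_n -> 'rV[R]_n).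
Implicit Types u v : 'rV[R]_n.

Lemma htD i u v : ht pi i (u + v) = ht pi i u + ht pi i v.
Proof. by rewrite /ht mulmxDl mxE. Qed.

Lemma htZ i (c : R) u : ht pi i (c *: u) = c * ht pi i u.
Proof. by rewrite /ht -scalemxAl mxE. Qed.

Lemma htN i u : ht pi i (- u) = - ht pi i u.
Proof. by rewrite -scaleN1r htZ mulN1r. Qed.

Lemma htB i u v : ht pi i (u - v) = ht pi i u - ht pi i v.
Proof. by rewrite htD htN. Qed.

Lemma ht_refl i u v : ht pi i (refl u v) = ht pi i v - (2 * dot v u / dot u u) * ht pi i u.
Proof. by rewrite htB htZ. Qed.

Hypothesis pi_basis : base_mx pi \in unitmx.

Lemma row_base_mx i : row i (base_mx pi) = pi i.
Proof. by apply/rowP => k; rewrite !mxE. Qed.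

Lemma ht_base i j : ht pi i (pi j) = (j == i)%:R.
Proof. by rewrite /ht -row_base_mx -row_mul mulmxV // !mxE. Qed.

Lemma ht_base_id i : ht pi i (pi i) = 1.
Proof. by rewrite ht_base eqxx. Qed.

Lemma dot_ht_suml u v : dot u v = \sum_i ht pi i u * dot (pi i) v.
Proof.
rewrite -{1}(mulmxKV pi_basis u) mulmx_sum_row dot_suml.
by apply: eq_bigr => i _; rewrite row_base_mx dotZl.
Qed.

End Heights.

Section RootSystem.
Variables (R : realType) (n : nat) (Phi : seq 'rV[R]_n) (pi : 'I_n -> 'rV[R]_n).
Hypothesis rs : irreducible_root_system_with_base Phi pi.
Implicit Types x y : 'rV[R]_n.

Lemma dot_root_gt0 x : x \in Phi -> 0 < dot x x.
Proof.
move=> xP; rewrite lt_def dot_ge0 dot_eq0 andbT.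
by apply: contraNneq (rs_nonzero rs) => <-.
Qed.

Lemma dot_refl_root x y : x \in Phi -> dot (refl x y) x = - dot y x.
Proof.
move=> xP; have := dot_root_gt0 xP; rewrite dotBl dotZl -mulrA => /lt0r_neq0 x0.
by rewrite mulVf // mulr1; ring.
Qed.

Lemma refl_rootK x : x \in Phi -> involutive (refl x).
Proof. by move=> xP y; rewrite {1}/refl dot_refl_root // mulrN mulNr scaleNr opprK subrK. Qed.

Lemma root_opp x : x \in Phi -> - x \in Phi.
Proof.
move=> xP; have := rs_refl rs xP xP; have := dot_root_gt0 xP.
rewrite /refl -mulrA => /lt0r_neq0 x0; rewrite divff // mulr1 scaler_nat.
by rewrite mulr2n opprD addNKr.
Qed.

Lemma root_sub x y : x \in Phi -> y \in Phi -> 0 < dot x y -> x != y -> x - y \in Phi.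
Proof.
move=> xP yP xy_gt0 xy.
have x_gt0 := dot_root_gt0 xP; have y_gt0 := dot_root_gt0 yP.
have [p e_p] := rs_integral rs xP yP; have [q e_q] := rs_integral rs yP xP.
have p_gt0 : 0 < p%:~R :> R by rewrite -e_p divr_gt0 // mulr_gt0 // dotC.
have q_gt0 : 0 < q%:~R :> R by rewrite -e_q divr_gt0 // mulr_gt0.
rewrite ltr0z in p_gt0; rewrite ltr0z in q_gt0.
have [p1|p_ne1] := eqVneq p 1.
  have := root_opp (rs_refl rs xP yP).
  by rewrite /refl e_p p1 scale1r opprB.
have [q1|q_ne1] := eqVneq q 1.
  by have := rs_refl rs yP xP; rewrite /refl e_q q1 scale1r.
(* otherwise (x, y) >= max(|x|^2, |y|^2), which forces x = y *)
have : (2%:~R <= p%:~R :> R) && (2%:~R <= q%:~R :> R) by rewrite !ler_int; lia.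
rewrite -e_p -e_q !ler_pdivlMr // dotC => /andP[px qy].
have : dot (x - y) (x - y) <= 0 by rewrite !dotBl !dotBr (dotC y x); lra.
by rewrite le_eqVlt ltNge dot_ge0 orbF dot_eq0 subr_eq0 (negPf xy).
Qed.

Lemma root_add x y : x \in Phi -> y \in Phi -> dot x y < 0 -> x != - y -> x + y \in Phi.
Proof.
move=> xP yP xy_lt0 xy; rewrite -(opprK y).
by apply: root_sub; rewrite ?root_opp ?dotNr ?oppr_gt0.
Qed.

Lemma pos_root_ht_gt0 i x : x \in Phi -> 0 < ht pi i x -> pos_root Phi pi x.
Proof.
move=> xP x_gt0; rewrite /pos_root xP; apply/forallP => j.
have [//|x_le0] := base_sign rs xP.
by have := x_le0 i; rewrite leNgt x_gt0.
Qed.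

Lemma pos_root_ht_ge0 i x : pos_root Phi pi x -> 0 <= ht pi i x.
Proof. by case/andP=> _ /forallP. Qed.

Lemma ht_root_gt_nat i x (k : nat) :
  x \in Phi -> k%:R < ht pi i x -> (k + 1)%:R <= ht pi i x.
Proof.
move=> xP; have [z ->] := base_integral rs i xP.
by rewrite !pmulrn ler_int ltr_int; lia.
Qed.

Lemma root_ht0_not_orthogonal i g : g \in Phi -> ht pi i g = 0 ->
  exists y, [/\ y \in Phi, ht pi i y != 0 & dot g y != 0].
Proof.
pose P x := (ht pi i x != 0) || has (fun y => (ht pi i y != 0) && (dot x y != 0)) Phi.
have P_orth u v : u \in Phi -> v \in Phi -> P u -> ~~ P v -> dot u v = 0.
  move=> uP vP Pu; rewrite negb_or negbK => /andP[/eqP v0 /hasPn v_orth].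
  have {}v_orth y : y \in Phi -> ht pi i y != 0 -> dot y v = 0.
    by move=> yP y0; have := v_orth y yP; rewrite y0 dotC => /negbNE/eqP.
  have [u0|] := eqVneq (ht pi i u) 0; last exact: v_orth.
  case/orP: Pu => [|/hasP[y yP /andP[y0 uy]]]; first by rewrite u0 eqxx.
  (* s_u y also has nonzero height, so v is orthogonal to y and to y - c u, c != 0 *)
  have := v_orth _ (rs_refl rs uP yP); rewrite ht_refl u0 mulr0 subr0.
  rewrite dotBl dotZl (v_orth y) // sub0r => /(_ y0) /eqP.
  rewrite oppr_eq0 !mulf_eq0 invr_eq0 pnatr_eq0 dotC (negPf uy).
  by rewrite (negPf (lt0r_neq0 (dot_root_gt0 uP))) => /eqP.
case: (rs_irreducible rs P_orth) => [allP gP g0 | /(_ _ (base_roots rs i))].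
  have /orP[|/hasP[y yP /andP[y0 gy]]] := allP g gP; first by rewrite g0 eqxx.
  by exists y.
by rewrite /P (ht_base_id (base_basis rs)) oner_eq0.
Qed.

Lemma exists_root_dot_lt0 i g : g \in Phi -> ht pi i g = 0 ->
  exists e, [/\ e \in Phi, 0 < ht pi i e & dot g e < 0].
Proof.
move=> gP g0; have [y [yP y_ne0 gy_ne0]] := root_ht0_not_orthogonal gP g0.
have [c [cP c_gt0 gc_ne0]] : exists c, [/\ c \in Phi, 0 < ht pi i c & dot g c != 0].
  case: (ltgtP (ht pi i y) 0) y_ne0 => // [y_lt0 _|y_gt0 _]; last by exists y.
  by exists (- y); rewrite root_opp // htN dotNr oppr_gt0 oppr_eq0.
case: (ltgtP (dot g c) 0) gc_ne0 => // [gc_lt0 _|gc_gt0 _]; first by exists c.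
exists (refl g c); rewrite (rs_refl rs) // ht_refl g0 mulr0 subr0.
by rewrite dotC dot_refl_root // oppr_lt0 dotC.
Qed.

End RootSystem.

Section HighestRoot.
Variables (R : realType) (n : nat) (Phi : seq 'rV[R]_n) (pi : 'I_n -> 'rV[R]_n).
Variable theta : 'rV[R]_n.
Hypothesis rs : irreducible_root_system_with_base Phi pi.
Hypothesis theta_highest : highest_root Phi pi theta.
Implicit Types x y : 'rV[R]_n.

Let pi_basis := base_basis rs.

Lemma dot_highest_base_ge0 i : 0 <= dot theta (pi i).
Proof.
case: theta_highest => thP th_max; have piP := base_roots rs i.
rewrite leNgt; apply/negP => th_lt0.
have := th_max _ i piP; rewrite ht_base_id // => th_ge1.
have th_ne : theta != - pi i.
  by apply: contraTneq th_ge1 => ->; rewrite htN ht_base_id // -ltNge; lra.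
have := th_max _ i (root_add rs thP piP th_lt0 th_ne).
by rewrite htD ht_base_id //; lra.
Qed.

Lemma dot_pos_root_highest_ge0 x : pos_root Phi pi x -> 0 <= dot x theta.
Proof.
case/andP=> _ /forallP x_ge0; rewrite (dot_ht_suml pi_basis).
by apply: sumr_ge0 => i _; rewrite mulr_ge0 // dotC dot_highest_base_ge0.
Qed.

Variable a : 'I_n.

Definition level_roots (c : R) := undup [seq x <- Phi | ht pi a x == c].

Lemma mem_level_roots c x : (x \in level_roots c) = (x \in Phi) && (ht pi a x == c).
Proof. by rewrite mem_undup mem_filter andbC. Qed.

Definition level_sum (c : R) : 'rV[R]_n := \sum_(x <- level_roots c) x.

Lemma dot_level_sum_base c i : i != a -> dot (level_sum c) (pi i) = 0.
Proof.
move=> ia; have piP := base_roots rs i; rewrite /level_sum; set s := level_roots c.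
have sK := refl_rootK rs piP.
have s_refl : perm_eq s (map (refl (pi i)) s).
  have s_stable x : x \in s -> refl (pi i) x \in s.
    rewrite !mem_level_roots => /andP[xP /eqP <-].
    by rewrite (rs_refl rs) // ht_refl ht_base // (negPf ia) mulr0 subr0 eqxx.
  apply: uniq_perm; rewrite ?map_inj_uniq ?undup_uniq //; first exact: inv_inj.
  move=> x; apply/idP/mapP => [xs|[y /s_stable ys ->]] //.
  by exists (refl (pi i) x); rewrite ?sK ?s_stable.
have : \sum_(x <- s) dot x (pi i) = - \sum_(x <- s) dot x (pi i).
  rewrite {1}(perm_big _ s_refl) big_map -sumrN.
  by apply: eq_bigr => x _; rewrite (dot_refl_root rs).
by rewrite dot_suml; lra.
Qed.

Lemma dot_level_sum c v : dot (level_sum c) v = ht pi a v * dot (level_sum c) (pi a).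
Proof.
rewrite dotC (dot_ht_suml pi_basis) (bigD1 a) //=.
rewrite big1 ?addr0 ?(dotC (pi a)) // => i ia.
by rewrite dotC dot_level_sum_base // mulr0.
Qed.

Lemma exists_highest_level_root x : 0 < ht pi a x ->
  exists y, [/\ y \in Phi, ht pi a y = ht pi a theta & 0 < dot y x].
Proof.
case: theta_highest => thP th_max x_gt0.
have th_gt0 : 0 < ht pi a theta.
  by apply: lt_le_trans (th_max _ a (base_roots rs a)); rewrite ht_base_id //.
set s := level_roots (ht pi a theta).
have th_s : theta \in s by rewrite mem_level_roots thP eqxx.
have sum_th_gt0 : 0 < dot (level_sum (ht pi a theta)) theta.
  rewrite dot_suml (big_rem _ th_s) /=; apply: ltr_pwDl (dot_root_gt0 rs thP) _.
  rewrite big_seq; apply: sumr_ge0 => y /mem_rem; rewrite mem_level_roots.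
  case/andP=> yP /eqP y_th; apply: dot_pos_root_highest_ge0.
  by apply: (pos_root_ht_gt0 rs (i := a)); rewrite // y_th.
have sum_x_gt0 : 0 < dot (level_sum (ht pi a theta)) x.
  by move: sum_th_gt0; rewrite (dot_level_sum _ theta) (dot_level_sum _ x) !pmulr_rgt0.
have [/hasP[y]|/hasPn s_le0] := boolP (has (fun y => 0 < dot y x) s).
  by rewrite mem_level_roots => /andP[yP /eqP y_th] ?; exists y.
move: sum_x_gt0; rewrite dot_suml big_seq ltNge sumr_le0 // => y /s_le0.
by rewrite -leNgt.
Qed.

Definition ht_ge_roots (k : R) : pred 'rV[R]_n :=
  fun g => pos_root Phi pi g && (k <= ht pi a g).

Lemma upper_ideal_ht_ge k : upper_ideal Phi pi (ht_ge_roots k).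
Proof.
split=> [g /andP[] //|g nu /andP[_ g_ge] nuP nugP].
rewrite /ht_ge_roots nugP htD; have := pos_root_ht_ge0 a nuP; lra.
Qed.

Lemma abelian_ht_ge k : ht pi a theta < k + k -> abelian_set Phi pi (ht_ge_roots k).
Proof.
move=> th_lt g1 g2 /andP[_ g1_ge] /andP[_ g2_ge]; apply/negP => /andP[g12P _].
by have := proj2 theta_highest _ a g12P; rewrite htD; lra.
Qed.

Lemma abelian_ideal_ht_gt k J x : 0 < k -> abelian_ideal Phi pi J ->
  (forall g, ht_ge_roots k g -> J g) -> J x -> 0 < ht pi a x ->
  ht pi a theta - k < ht pi a x.
Proof.
move=> k_gt0 [[Jpos _] Jab] IJ Jx x_gt0; rewrite ltNge; apply/negP => x_le.
have xP : x \in Phi by case/andP: (Jpos x Jx).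
have [y [yP y_th xy_gt0]] := exists_highest_level_root x_gt0.
have yx : y != x by apply: contraTneq x_le => <-; rewrite y_th -ltNge; lra.
have yx_ge : k <= ht pi a (y - x) by rewrite htB y_th; lra.
have Jyx : J (y - x).
  apply: IJ; rewrite /ht_ge_roots yx_ge andbT.
  by apply: (pos_root_ht_gt0 rs (i := a)); [exact: (root_sub rs) | lra].
have := Jab _ _ Jyx Jx; rewrite subrK (pos_root_ht_gt0 rs (i := a)) //.
by rewrite y_th; lra.
Qed.

Variable d : nat.
Hypothesis theta_level : ht pi a theta = (2 * d + 1)%:R.

Lemma abelian_ideal_ht_ge J x : abelian_ideal Phi pi J ->
  (forall g, ht_ge_roots (d + 1)%:R g -> J g) -> J x -> 0 < ht pi a x ->
  (d + 1)%:R <= ht pi a x.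
Proof.
move=> HJ IJ Jx x_gt0; have xP : x \in Phi by case/andP: (HJ.1.1 x Jx).
have k_gt0 : 0 < (d + 1)%:R :> R by rewrite ltr0n addn1.
apply: (ht_root_gt_nat rs xP).
have := abelian_ideal_ht_gt k_gt0 HJ IJ Jx x_gt0.
by rewrite theta_level natrD natrM natrD; lra.
Qed.

Lemma abelian_ideal_ht_neq0 J g : abelian_ideal Phi pi J ->
  (forall g, ht_ge_roots (d + 1)%:R g -> J g) -> J g -> ht pi a g != 0.
Proof.
move=> HJ IJ Jg; apply/eqP => g0; case: (HJ) => [[Jpos Jup] Jab].
have gP : g \in Phi by case/andP: (Jpos g Jg).
have [e [eP e_gt0 ge_lt0]] := exists_root_dot_lt0 rs gP g0.
have ePos := pos_root_ht_gt0 rs eP e_gt0.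
have g_ne : g != - e.
  by apply: contraTneq e_gt0 => ge; rewrite -[e]opprK -ge htN g0 oppr0 ltxx.
have egPos : pos_root Phi pi (e + g).
  apply: (pos_root_ht_gt0 rs (i := a)); last by rewrite htD g0 addr0.
  by rewrite addrC; apply: (root_add rs).
have [e_ge|e_lt] := lerP (d + 1)%:R (ht pi a e).
  have Je : J e by apply: IJ; rewrite /ht_ge_roots ePos e_ge.
  by have := Jab _ _ Jg Je; rewrite addrC egPos.
have := abelian_ideal_ht_ge HJ IJ (Jup g e Jg ePos egPos).
by rewrite htD g0 addr0 leNgt e_lt => /(_ e_gt0).
Qed.

End HighestRoot.

Theorem proposition3p8 (R : realType) (n : nat) (Phi : seq 'rV[R]_n)
    (pi : 'I_n -> 'rV[R]_n) (theta : 'rV[R]_n) (a : 'I_n) (d : nat) :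
  irreducible_root_system_with_base Phi pi ->
  highest_root Phi pi theta ->
  ht pi a theta = (2 * d + 1)%:R ->
  maximal_abelian_ideal Phi pi
    (fun g => pos_root Phi pi g && ((d + 1)%:R <= ht pi a g)).
Proof.
move=> rs th_highest th_level.
split; first split.
- exact: upper_ideal_ht_ge.
- by apply: (abelian_ht_ge th_highest); rewrite th_level natrD natrM natrD; lra.
move=> J HJ IJ g Jg; have gPos := HJ.1.1 g Jg.
rewrite /= gPos; apply: (abelian_ideal_ht_ge rs th_highest th_level HJ IJ Jg).
have g_ne0 := abelian_ideal_ht_neq0 rs th_highest th_level HJ IJ Jg.
by rewrite lt_def g_ne0 (pos_root_ht_ge0 a gPos).
Qed.
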